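(* Let $k\ge 3$ and $s\ge 1$ be integers. For every sufficiently large $n$ there exists $\mathcal{G} \subset \binom{[n]}{k}$ with $\nu(\mathcal{G}) = s$ and $|\mathcal{G}| = (1+o(1))\binom{2s+1}{2}\binom{n}{k-2}$ (as $n\to\infty$) such that $|\partial\mathcal{G}| < |\partial L_{|\mathcal{G}|}EM(n,k,s,1)|$.
   Context: $[n]=\{1,\dots,n\}$, $\binom{[n]}{k}$ is the family of $k$-subsets of $[n]$. $\nu(\mathcal{G})$ is the maximum number of pairwise disjoint members of $\mathcal{G}$. $\partial\mathcal{G}=\{A\in\binom{[n]}{k-1}: A\subset B\text{ for some }B\in\mathcal{G}\}$. Colex order on $\binom{[n]}{k}$: $A\prec B$ iff $\max\big((A\setminus B)\cup(B\setminus A)\big)\in B$; for $\mathcal{F}\subset\binom{[n]}{k}$ and $m\le|\mathcal{F}|$, $L_m\mathcal{F}$ is the set of the first $m$ members of $\mathcal{F}$ in colex order. $EM(n,k,s,1)=\{A\in\binom{[n]}{k}: A\cap[s]\ne\emptyset\}$. *)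

From mathcomp Require Import all_boot all_order all_algebra.
Set Implicit Arguments. Unset Strict Implicit. Unset Printing Implicit Defensive.

(* Ground set [n] = {1,...,n} is modelled by 'I_n = {0,...,n-1}, element i
   standing for i+1 (order-preserving, so colex order is unchanged). *)

Definition k_uniform (n k : nat) (G : {set {set 'I_n}}) : bool :=
  [forall A in G, #|A| == k].

Definition pairwise_disjoint (n : nat) (F : {set {set 'I_n}}) : bool :=
  [forall A in F, forall B in F, (A != B) ==> [disjoint A & B]].

Definition nu (n : nat) (G : {set {set 'I_n}}) : nat :=
  \max_(F in powerset G | pairwise_disjoint F) #|F|.

Definition shadow (n k : nat) (G : {set {set 'I_n}}) : {set {set 'I_n}} :=
  [set A : {set 'I_n} | (#|A| == k.-1) && [exists B in G, A \subset B]].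

Definition colex_lt (n : nat) (A B : {set 'I_n}) : bool :=
  let D := (A :\: B) :|: (B :\: A) in
  [exists b in D, (b \in B) && [forall x in D, (x <= b)%N]].

Definition colex_init (n : nat) (m : nat) (F : {set {set 'I_n}}) : {set {set 'I_n}} :=
  [set A in F | #|[set B in F | colex_lt B A]| < m].

Definition EM1 (n k s : nat) : {set {set 'I_n}} :=
  [set A : {set 'I_n} | (#|A| == k) && [exists i in A, (val i < s)%N]].

From mathcomp Require Import all_boot all_order all_algebra zify.

(* Put a := 2s+1 and let G consist of the k-subsets of [a+b] that meet [a]
   in exactly two points.  Disjoint members of G use disjoint pairs of [a],
   so nu(G) = s once b >= s(k-2); moreover |G| = C(a,2) C(b,k-2) and the
   shadow dG has at most a C(b,k-2) + C(a,2) C(b,k-3) members.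
   Let t be least with a C(n-a,k-2) < C(t,k-1) and b least with
   C(t-1,k-1) <= a C(b,k-2).  The members of EM(n,k,s,1) inside [t] form an
   initial colex segment of at most s C(t-1,k-1) <= |G| sets, so the shadow
   of L_|G| EM(n,k,s,1) contains every (k-1)-subset of [t].  As t grows like
   n^((k-2)/(k-1)), C(t-1,k-2) swamps the O(n^(k-3)) error terms, which
   gives |dG| < C(t,k-1); and b = (1 - o(1)) n gives the size of G. *)

Set Implicit Arguments.
Unset Strict Implicit.
Unset Printing Implicit Defensive.

(** * Binomial estimates *)

Lemma leq_expn2r m n e : m <= n -> m ^ e <= n ^ e.
Proof. by case: e => [|e] // le_mn; rewrite leq_exp2r. Qed.

Lemma ffact_leq_expn n i : n ^_ i <= n ^ i.
Proof.
elim: i n => [|i IH] n //; rewrite ffactnS expnS leq_mul //.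
exact: leq_trans (IH _) (leq_expn2r i (leq_pred n)).
Qed.

Lemma expn_leq_ffact y i : y ^ i <= (y + i) ^_ i.
Proof.
elim: i => [|i IH] //; rewrite ffactnS expnS addnS /= leq_mul //.
exact: leqW (leq_addr i y).
Qed.

Lemma sub_leq_bin x i : x - i <= 'C(x, i.+1).
Proof.
elim: i x => [|i IH] [|x] //; first by rewrite subn0 bin1.
by rewrite binS subSS (leq_trans (IH x)) ?leq_addl.
Qed.

Lemma exists_bin_gt x i : exists t, x < 'C(t, i.+1).
Proof. by exists (x.+1 + i); apply: leq_trans (sub_leq_bin _ i); rewrite addnK. Qed.

Lemma bin_addr_le m d i : 'C(m + d, i.+1) <= 'C(m, i.+1) + d * 'C(m + d, i).
Proof.
elim: d => [|d IH]; first by rewrite addn0 addn0.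
have le_bin : 'C(m + d, i) <= 'C(m + d.+1, i) by rewrite leq_bin2l // addnS.
have := leq_mul2l d ('C(m + d, i)) ('C(m + d.+1, i)); rewrite le_bin orbT.
rewrite addnS binS -addnS mulSn; lia.
Qed.

Lemma leq_mul_bin_succ L x i : L * i.+1 <= x - i -> L * 'C(x, i) <= 'C(x, i.+1).
Proof.
move=> hL; rewrite -(leq_pmul2l (ltn0Sn i)) mul_bin_left mulnCA mulnA.
by rewrite leq_mul2r hL orbT.
Qed.

Lemma bin_succ_dominates c q m y i :
  m <= q * y -> c * i.+1 * q ^ i < y -> c * 'C(m, i) < 'C(y + i.+1, i.+1).
Proof.
move=> hm hy; rewrite -(ltn_pmul2r (fact_gt0 i.+1)) bin_ffact factS.
rewrite mulnCA -mulnA bin_ffact mulnA.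
have y_gt0 : 0 < y ^ i by rewrite expn_gt0 (leq_ltn_trans (leq0n _) hy).
apply: leq_trans (expn_leq_ffact y i.+1); rewrite expnSr.
apply: leq_ltn_trans (_ : c * i.+1 * q ^ i * y ^ i < _).
  rewrite [i.+1 * c]mulnC -!mulnA !leq_mul2l -expnMn; apply/orP; right; apply/orP; right.
  exact: leq_trans (ffact_leq_expn _ _) (leq_expn2r _ hm).
by rewrite [y ^ i * y]mulnC ltn_pmul2r.
Qed.

(** * Families split across two disjoint blocks *)

Lemma card_bigcup_le (I T : finType) (P : pred I) (F : I -> {set T}) :
  #|\bigcup_(i | P i) F i| <= \sum_(i | P i) #|F i|.
Proof.
elim/big_rec2: _ => [|i U m _ hU]; first by rewrite cards0.
by apply: leq_trans (leq_card_setU _ _).1 _; rewrite leq_add2l.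
Qed.

Lemma setIUl_disjoint (T : finType) (P R I : {set T}) :
  P \subset I -> [disjoint R & I] -> (P :|: R) :&: I = P.
Proof. by move=> sPI dRI; rewrite setIUl (setIidPl sPI) (disjoint_setI0 dRI) setU0. Qed.

Definition ksubsets (T : finType) (B : {set T}) k : {set {set T}} :=
  [set A : {set T} | A \subset B & #|A| == k].

Definition seg n lo hi : {set 'I_n} := [set x : 'I_n | lo <= x < hi].

Lemma card_seg n lo hi : hi <= n -> #|seg n lo hi| = hi - lo.
Proof.
have card_prefix h : h <= n -> #|seg n 0 h| = h.
  move=> hn; have widen_inj : injective (widen_ord hn) by move=> i i' [] /val_inj.
  rewrite -[RHS]card_ord -(card_imset _ widen_inj); apply: eq_card => x.
  rewrite inE /=; apply/idP/imsetP => [x_lt | [i _ ->]]; last exact: (ltn_ord i).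
  by exists (Ordinal x_lt) => //; apply: val_inj.
move=> hn; have := cardsID (seg n 0 lo) (seg n 0 hi).
have -> : seg n 0 hi :&: seg n 0 lo = seg n 0 (minn hi lo).
  by apply/setP => x; rewrite !inE; lia.
have -> : seg n 0 hi :\: seg n 0 lo = seg n lo hi by apply/setP => x; rewrite !inE; lia.
by rewrite !card_prefix ?geq_minl ?(leq_trans (geq_minl _ _)) //; lia.
Qed.

Lemma disjoint_seg n lo hi lo' hi' : hi <= lo' -> [disjoint seg n lo hi & seg n lo' hi'].
Proof. by move=> h; rewrite -setI_eq0; apply/eqP/setP => x; rewrite !inE; lia. Qed.

Section SplitSets.

Variables (n : nat) (I J : {set 'I_n}).
Hypothesis disIJ : [disjoint I & J].

Definition split_sets p q : {set {set 'I_n}} :=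
  [set PR.1 :|: PR.2 | PR in setX (ksubsets I p) (ksubsets J q)].

Lemma card_setU_split (A : {set 'I_n}) :
  A \subset I :|: J -> #|A| = #|A :&: I| + #|A :&: J|.
Proof.
move=> sA; rewrite -{1}(setIidPl sA) setIUr cardsU.
by rewrite setIACA setIid (disjoint_setI0 disIJ) setI0 cards0 subn0.
Qed.

Lemma traces_setU (P R : {set 'I_n}) :
  P \subset I -> R \subset J -> (P :|: R) :&: I = P /\ (P :|: R) :&: J = R.
Proof.
move=> sPI sRJ; split; first by rewrite setIUl_disjoint // (disjointWl sRJ) // disjoint_sym.
by rewrite setUC setIUl_disjoint // (disjointWl sPI).
Qed.

Lemma split_setsP (A : {set 'I_n}) p q :
  reflect [/\ A \subset I :|: J, #|A :&: I| = p & #|A :&: J| = q] (A \in split_sets p q).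
Proof.
apply: (iffP imsetP) => [[[P R]] | [sA cAI cAJ]].
  rewrite !inE /= => /andP[/andP[sPI /eqP cP] /andP[sRJ /eqP cR]] ->.
  have [-> ->] := traces_setU sPI sRJ; split=> //; exact: setUSS.
exists (A :&: I, A :&: J); first by rewrite !inE !subsetIr cAI cAJ !eqxx.
by rewrite /= -setIUr; apply/esym/setIidPl.
Qed.

Lemma card_split_sets_mem (A : {set 'I_n}) p q : A \in split_sets p q -> #|A| = p + q.
Proof. by case/split_setsP => sA <- <-; exact: card_setU_split. Qed.

Lemma card_split_sets p q : #|split_sets p q| = 'C(#|I|, p) * 'C(#|J|, q).
Proof.
rewrite card_in_imset ?cardsX ?cards_draws // => [[P R] [P' R']].
rewrite !inE /= => /andP[/andP[sPI _] /andP[sRJ _]] /andP[/andP[sPI' _] /andP[sRJ' _]] eqPR.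
have [eP eR] := traces_setU sPI sRJ; have [eP' eR'] := traces_setU sPI' sRJ'.
by move: eP eR; rewrite eqPR eP' eR' => <- <-.
Qed.

Lemma shadow_split_sets p q :
  shadow (p + q) (split_sets p q) \subset split_sets p.-1 q :|: split_sets p q.-1.
Proof.
apply/subsetP => B; rewrite inE => /andP[/eqP cB /existsP[A /andP[]]].
case/split_setsP => sA cAI cAJ sBA; have sB := subset_trans sBA sA.
have leI : #|B :&: I| <= p by rewrite -cAI subset_leq_card // setSI.
have leJ : #|B :&: J| <= q by rewrite -cAJ subset_leq_card // setSI.
have := card_setU_split sB; rewrite cB => eB; rewrite inE.
have [[eI eJ] | [eI eJ]] :
    (#|B :&: I| = p.-1 /\ #|B :&: J| = q) \/ (#|B :&: I| = p /\ #|B :&: J| = q.-1) by lia.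
  by apply/orP; left; apply/split_setsP.
by apply/orP; right; apply/split_setsP.
Qed.

Lemma card_shadow_split_sets p q :
  #|shadow (p + q) (split_sets p q)| <=
    'C(#|I|, p.-1) * 'C(#|J|, q) + 'C(#|I|, p) * 'C(#|J|, q.-1).
Proof.
rewrite -!card_split_sets; apply: leq_trans (subset_leq_card (shadow_split_sets p q)) _.
exact: (leq_card_setU _ _).1.
Qed.

End SplitSets.

Lemma nu_ge_family n (T : finType) (G : {set {set 'I_n}}) (f : T -> {set 'I_n}) :
    (forall i, f i \in G) -> (forall i, f i != set0) ->
    (forall i i', i != i' -> [disjoint f i & f i']) ->
  #|T| <= nu G.
Proof.
move=> fG f_neq0 f_disj.
have f_inj : injective f.
  move=> i i' eqf; apply/eqP; apply: contraT => /f_disj.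
  by rewrite eqf -setI_eq0 setIid (negbTE (f_neq0 i')).
rewrite -(card_imset _ f_inj); apply: leq_bigmax_cond; rewrite powersetE.
apply/andP; split; first by apply/subsetP => A /imsetP[i _ ->].
apply/forall_inP => _ /imsetP[i _ ->]; apply/forall_inP => _ /imsetP[i' _ ->].
by apply/implyP => ne; apply: f_disj; apply: contraNneq ne => ->.
Qed.

Lemma nu_trace_le n (G : {set {set 'I_n}}) (I : {set 'I_n}) p :
  (forall A, A \in G -> #|A :&: I| = p) -> nu G * p <= #|I|.
Proof.
move=> cG; apply: (big_ind (fun x => x * p <= #|I|)) => //.
  by move=> x y hx hy; rewrite maxnMl geq_max hx hy.
move=> F /andP[]; rewrite powersetE => sFG /forall_inP F_disj.
pose tr A := if A \in F then A :&: I else set0.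
have tr_disj A B : A != B -> [disjoint tr A & tr B].
  rewrite /tr -setI_eq0; case: ifP => AF; last by rewrite set0I.
  case: ifP => BF AB; last by rewrite setI0.
  have /forall_inP/(_ B BF) := F_disj A AF; rewrite AB -setI_eq0 => /eqP AB0.
  by rewrite setIACA AB0 set0I.
have card_cover : #|\bigcup_A tr A| = \sum_A #|tr A|.
  rewrite -sum1_card (partition_disjoint_bigcup _ _ tr_disj).
  by apply: eq_bigr => A _; rewrite sum1_card.
have -> : #|F| * p = \sum_A #|tr A|.
  rewrite -sum_nat_const big_mkcond; apply: eq_bigr => A _.
  by rewrite /tr; case: ifP => AF; rewrite ?cards0 // cG // (subsetP sFG).
rewrite -card_cover subset_leq_card //; apply/bigcupsP => A _.
by rewrite /tr; case: ifP => _; rewrite ?subsetIr ?sub0set.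
Qed.

(** * Initial colex segments of EM(n,k,s,1) *)

Definition EM1_below n k s t : {set {set 'I_n}} :=
  [set A in EM1 n k s | A \subset seg n 0 t].

Lemma colex_lt_irrefl n (A : {set 'I_n}) : ~~ colex_lt A A.
Proof. by apply/existsP => -[b]; rewrite setDv setU0 inE. Qed.

Lemma colex_lt_subset_seg n t (A B : {set 'I_n}) :
  colex_lt B A -> A \subset seg n 0 t -> B \subset seg n 0 t.
Proof.
case/existsP => b /andP[bD /andP[bA /forall_inP b_max]] /subsetP sA.
apply/subsetP => y yB; case yA: (y \in A); first exact: sA.
have yD : y \in (B :\: A) :|: (A :\: B) by rewrite !inE yA yB.
have := sA b bA; have := b_max y yD; rewrite !inE; lia.
Qed.

Lemma EM1_below_colex_init n k s t m :
  #|EM1_below n k s t| <= m -> EM1_below n k s t \subset colex_init m (EM1 n k s).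
Proof.
move=> hm; apply/subsetP => A A_below; have := A_below; rewrite inE => /andP[AE sA].
have sub : [set B in EM1 n k s | colex_lt B A] \subset EM1_below n k s t :\ A.
  apply/subsetP => B; rewrite !inE => /andP[BE BA].
  rewrite BE (colex_lt_subset_seg BA sA) andbT andbT.
  by apply: contraTneq BA => ->; exact: colex_lt_irrefl.
rewrite (cardsD1 A) A_below in hm.
by rewrite inE AE (leq_ltn_trans (subset_leq_card sub) hm).
Qed.

Lemma card_EM1_below n k s t :
  s <= t -> t <= n -> #|EM1_below n k.+1 s t| <= s * 'C(t.-1, k).
Proof.
move=> st tn; pose ext x := [set x |: R | R in ksubsets (seg n 0 t :\ x) k].
have sub : EM1_below n k.+1 s t \subset \bigcup_(x in seg n 0 s) ext x.
  apply/subsetP => A; rewrite !inE => /andP[/andP[cA /existsP[x /andP[xA xs]]] sA].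
  apply/bigcupP; exists x; first by rewrite inE /= xs.
  apply/imsetP; exists (A :\ x); last by rewrite setD1K.
  have cAx : #|A :\ x| = k by have := cardsD1 x A; rewrite xA (eqP cA) add1n => -[].
  by rewrite inE setSD // cAx eqxx.
apply: leq_trans (subset_leq_card sub) _; apply: leq_trans (card_bigcup_le _ _) _.
rewrite -[s in s * _]subn0 -(card_seg 0 (leq_trans st tn)) -sum_nat_const.
apply: leq_sum => x; rewrite inE /= => xs.
apply: leq_trans (leq_imset_card _ _) _; rewrite cards_draws.
suff -> : #|seg n 0 t :\ x| = t.-1 by [].
have := cardsD1 x (seg n 0 t); rewrite card_seg // inE /= (leq_trans xs st); lia.
Qed.

Lemma EM1_below_extension n k s t (B : {set 'I_n}) :
    0 < s -> k < t -> t <= n -> B \subset seg n 0 t -> #|B| = k ->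
  exists2 x, x \notin B & x |: B \in EM1_below n k.+1 s t.
Proof.
move=> s_gt0 kt tn sB cB.
suff [x [xB xt meets]] :
    exists x : 'I_n, [/\ x \notin B, x < t & [exists y in x |: B, val y < s]].
  exists x => //; rewrite !inE cardsU1 xB cB eqxx meets subUset sub1set inE /=.
  by rewrite xt sB.
have [meets | avoids] := boolP [exists y in B, val y < s].
  have : seg n 0 t :\: B != set0.
    by rewrite -card_gt0 cardsD (setIidPr sB) card_seg // cB subn0 subn_gt0.
  case/set0Pn => x; rewrite !inE /= => /andP[xB xt]; exists x; split => //.
  case/existsP: meets => y /andP[yB ys]; apply/existsP; exists y.
  by rewrite !inE yB orbT ys.
have n_gt0 : 0 < n by lia.
pose x0 := Ordinal n_gt0.
have x0_meets : [exists y in x0 |: B, val y < s].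
  by apply/existsP; exists x0; rewrite !inE eqxx.
have x0B : x0 \notin B.
  by apply: contra avoids => x0B; apply/existsP; exists x0; rewrite x0B.
by exists x0; split => //=; lia.
Qed.

Lemma shadow_colex_init_ge n k s t m :
    0 < s -> k < t -> s <= t -> t <= n -> s * 'C(t.-1, k) <= m ->
  'C(t, k) <= #|shadow k.+1 (colex_init m (EM1 n k.+1 s))|.
Proof.
move=> s_gt0 kt st tn hm.
have below := EM1_below_colex_init (leq_trans (card_EM1_below k st tn) hm).
rewrite -[t in 'C(t, k)]subn0 -(card_seg 0 tn) -cards_draws; apply: subset_leq_card.
apply/subsetP => B; rewrite inE => /andP[sB /eqP cB].
have [x xB xB_below] := EM1_below_extension s_gt0 kt tn sB cB.
rewrite inE cB eqxx /=; apply/existsP; exists (x |: B).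
by rewrite subsetUr andbT (subsetP below).
Qed.

(** * The thresholds t_n and b_n *)

Definition eventually (P : nat -> Prop) : Prop := exists N, forall n, N <= n -> P n.

Lemma eventually_ge N : eventually (fun n => N <= n).
Proof. by exists N. Qed.

Lemma eventually_and (P Q : nat -> Prop) :
  eventually P -> eventually Q -> eventually (fun n => P n /\ Q n).
Proof.
move=> [N1 h1] [N2 h2]; exists (maxn N1 N2) => n; rewrite geq_max => /andP[n1 n2].
by split; [exact: h1 | exact: h2].
Qed.

Lemma eventually_impl (P Q : nat -> Prop) :
  eventually P -> (forall n, P n -> Q n) -> eventually Q.
Proof. by move=> [N hN] PQ; exists N => n /hN /PQ. Qed.

Section Thresholds.

(* The sets have size k = j+3, so that k-1 = j.+2 and k-2 = j.+1. *)
Variables j s : nat.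
Local Notation a := (2 * s + 1).

Fact a_gt0 : 0 < a. Proof. by rewrite addn1. Qed.

Fact bin2_a : 'C(a, 2) = a * s.
Proof. by rewrite bin2 addn1 /= mulnCA mul2n doubleK. Qed.

Definition M n := 'C(n - a, j.+1).

Definition tn n := ex_minn (exists_bin_gt (a * M n) j.+1).

Lemma tn_gt n : a * M n < 'C(tn n, j.+2).
Proof. by rewrite /tn; case: ex_minnP. Qed.

Lemma tn_min n t : a * M n < 'C(t, j.+2) -> tn n <= t.
Proof. by rewrite /tn; case: ex_minnP => t0 _; apply. Qed.

Lemma lt_tn n t : 'C(t, j.+2) <= a * M n -> t < tn n.
Proof.
move=> le_t; rewrite ltnNge; apply/negP => /(leq_bin2l j.+2)/(leq_trans (tn_gt n)).
by rewrite ltnNge le_t.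
Qed.

Lemma tn_gt0 n : 0 < tn n.
Proof. by apply: lt_tn; rewrite bin0n. Qed.

Lemma bin_tn_pred_le n : 'C((tn n).-1, j.+2) <= a * M n.
Proof. by rewrite leqNgt; apply/negP => /tn_min; rewrite leqNgt ltn_predL tn_gt0. Qed.

Lemma bin_tn_split n : 'C(tn n, j.+2) = 'C((tn n).-1, j.+2) + 'C((tn n).-1, j.+1).
Proof. by rewrite -binS prednK ?tn_gt0. Qed.

Lemma exists_bn n : exists b, 'C((tn n).-1, j.+2) <= a * 'C(b, j.+1).
Proof.
have [b hb] := exists_bin_gt 'C((tn n).-1, j.+2) j.
by exists b; rewrite (leq_trans (ltnW hb)) ?leq_pmull ?a_gt0.
Qed.

Definition bn n := ex_minn (exists_bn n).

Lemma bn_ge n : 'C((tn n).-1, j.+2) <= a * 'C(bn n, j.+1).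
Proof. by rewrite /bn; case: ex_minnP. Qed.

Lemma bn_min n b : 'C((tn n).-1, j.+2) <= a * 'C(b, j.+1) -> bn n <= b.
Proof. by rewrite /bn; case: ex_minnP => b0 _; apply. Qed.

Lemma bn_le n : bn n <= n - a.
Proof. exact/bn_min/bin_tn_pred_le. Qed.

Lemma tn_unbounded L : eventually (fun n => L <= tn n).
Proof.
exists ('C(L, j.+2) + j + a) => n hn; apply/ltnW/lt_tn.
apply: leq_trans (leq_pmull _ a_gt0); apply: leq_trans (sub_leq_bin _ j).
lia.
Qed.

(* Otherwise t_n - 1 would be so large that C(t_n - 1, k-1) > a M n,
   against the minimality of t_n. *)
Lemma tn_small : eventually (fun n => s.+1 * tn n <= n - a - j).
Proof.
pose K0 := a * j.+2 * (2 * s.+1) ^ j.+1.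
exists (a + (s.+1 * (K0 + j + 3) + 2 * s.+1 * j.+3 + 2 * j)) => n hn.
rewrite leqNgt; apply/negP => t_big.
have := bin_tn_pred_le n; rewrite /M.
move: t_big; set t := tn n; set m := n - a => t_big.
have m_big : s.+1 * (K0 + j + 3) + 2 * s.+1 * j.+3 + 2 * j <= m by rewrite /m; lia.
have t_gt : K0 + j + 3 < t by rewrite -(ltn_pmul2l (ltn0Sn s)); lia.
have m_le : m <= 2 * s.+1 * (t - j.+3) by rewrite mulnBr -mulnA; lia.
have := bin_succ_dominates m_le (_ : K0 < t - j.+3).
have -> : t - j.+3 + j.+2 = t.-1 by lia.
by move=> dominates; rewrite leqNgt dominates //; lia.
Qed.

Lemma bin_tn_pred_margin :
  eventually (fun n => a * s.+1 * 'C(n - a, j) < 'C((tn n).-1, j.+1)).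
Proof.
apply: (eventually_impl tn_small) => n small.
rewrite -(ltn_pmul2l (tn_gt0 n)) mul_bin_diag.
have step1 : s.+1 * tn n * 'C(n - a, j) <= j.+1 * M n.
  by rewrite /M mul_bin_left leq_mul2r small orbT.
have step2 : a * (j.+1 * M n) < j.+2 * 'C(tn n, j.+2).
  rewrite mulnCA (leq_ltn_trans _ (_ : j.+2 * (a * M n) < _)) ?ltn_pmul2l ?tn_gt //.
  by rewrite leq_mul2r leqnSn orbT.
apply: leq_ltn_trans step2; rewrite mulnCA -mulnA leq_mul2l.
by rewrite mulnA step1 orbT.
Qed.

Lemma shadow_bound_lt_bin_tn :
  eventually (fun n => a * 'C(bn n, j.+1) + 'C(a, 2) * 'C(bn n, j) < 'C(tn n, j.+2)).
Proof.
apply: (eventually_impl (eventually_and bin_tn_pred_margin (tn_unbounded j.+3))).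
move=> n [margin t_ge].
have b_gt0 : 0 < bn n.
  have T_gt0 : 0 < 'C((tn n).-1, j.+2) by rewrite bin_gt0; lia.
  by rewrite lt0n; apply/eqP => b0; have := bn_ge n; rewrite b0 bin0n muln0; lia.
have b_pred : a * 'C((bn n).-1, j.+1) < 'C((tn n).-1, j.+2).
  by rewrite ltnNge; apply/negP => /bn_min; rewrite leqNgt ltn_predL b_gt0.
have le1 : a * 'C((bn n).-1, j) <= a * 'C(n - a, j).
  by rewrite leq_mul2l leq_bin2l ?orbT // (leq_trans (leq_pred _)) ?bn_le.
have le2 : a * s * 'C(bn n, j) <= a * s * 'C(n - a, j).
  by rewrite leq_mul2l leq_bin2l ?orbT ?bn_le.
rewrite bin_tn_split bin2_a -(prednK b_gt0) binS prednK //; lia.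
Qed.

Lemma bn_large : eventually (fun n => s * j.+1 <= bn n).
Proof.
apply: (eventually_impl (tn_unbounded (a * 'C(s * j.+1, j.+1) + j.+3))) => n t_big.
rewrite leqNgt; apply/negP => /ltnW/(leq_bin2l j.+1) small_b.
have := leq_trans (bn_ge n) (leq_mul (leqnn a) small_b).
have := sub_leq_bin (tn n).-1 j.+1; lia.
Qed.

(* a M n - a C(b_n, k-2) < C(t_n - 1, k-2) = o(M n), and
   C(n, k-2) - M n <= a C(n, k-3) = o(C(n, k-2)). *)
Lemma bn_asymptotic K :
  eventually (fun n => K * 'C(n, j.+1) <= K * 'C(bn n, j.+1) + 'C(n, j.+1)).
Proof.
have X_small : eventually (fun n => 2 * K * 'C((tn n).-1, j.+1) <= M n).
  apply: (eventually_impl (tn_unbounded (2 * K * a * j.+2 + j.+2))) => n t_big.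
  rewrite -(leq_pmul2l a_gt0); apply: leq_trans (bin_tn_pred_le n).
  by rewrite mulnA [a * _]mulnC; apply: leq_mul_bin_succ; lia.
have Y_small : eventually (fun n => 2 * a * K * 'C(n, j) <= 'C(n, j.+1)).
  apply: (eventually_impl (eventually_ge (2 * a * K * j.+1 + j))) => n hn.
  by apply: leq_mul_bin_succ; lia.
apply: (eventually_impl (eventually_and (eventually_and X_small Y_small) (eventually_ge a))).
move=> n [[hX hY] an].
have split_n : 'C(n, j.+1) <= M n + a * 'C(n, j).
  by have := bin_addr_le (n - a) a j; rewrite subnK.
have M_lt : a * M n < a * 'C(bn n, j.+1) + 'C((tn n).-1, j.+1).
  by have := tn_gt n; rewrite bin_tn_split; have := bn_ge n; lia.
have M_le : M n <= 'C(n, j.+1) by rewrite leq_bin2l ?leq_subr.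
have P1 := leq_mul (leqnn (a * K)) split_n.
have P2 := leq_mul (leqnn K) (ltnW M_lt).
have P3 := leq_mul (leqnn a) hY.
rewrite -(leq_pmul2l a_gt0); lia.
Qed.

End Thresholds.

(** * The construction *)

Section Construction.

Variables j s : nat.
Hypothesis s_gt0 : 0 < s.
Local Notation a := (2 * s + 1).

Definition two_point_sets n b : {set {set 'I_n}} :=
  split_sets (seg n 0 a) (seg n a (a + b)) 2 j.+1.

Fact disjoint_head n b : [disjoint seg n 0 a & seg n a (a + b)].
Proof. exact: disjoint_seg. Qed.

Lemma two_point_sets_uniform n b : k_uniform j.+3 (two_point_sets n b).
Proof. by apply/forall_inP => A /(card_split_sets_mem (disjoint_head n b)) ->. Qed.

Lemma card_two_point_sets n b :
  a + b <= n -> #|two_point_sets n b| = 'C(a, 2) * 'C(b, j.+1).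
Proof.
move=> hab; have an : a <= n := leq_trans (leq_addr b a) hab.
by rewrite card_split_sets ?disjoint_head // !card_seg // subn0 addKn.
Qed.

Lemma card_shadow_two_point_sets n b : a + b <= n ->
  #|shadow j.+3 (two_point_sets n b)| <= a * 'C(b, j.+1) + 'C(a, 2) * 'C(b, j).
Proof.
move=> hab; have an : a <= n := leq_trans (leq_addr b a) hab.
have := card_shadow_split_sets (disjoint_head n b) 2 j.+1.
by rewrite !card_seg // subn0 addKn bin1.
Qed.

Lemma nu_two_point_sets n b :
  a + b <= n -> s * j.+1 <= b -> nu (two_point_sets n b) = s.
Proof.
move=> hab hb; have an : a <= n := leq_trans (leq_addr b a) hab.
apply/eqP; rewrite eqn_leq; apply/andP; split.
  have : nu (two_point_sets n b) * 2 <= #|seg n 0 a|.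
    by apply: nu_trace_le => A; case/(split_setsP (disjoint_head n b)).
  rewrite card_seg // subn0; lia.
pose f (i : 'I_s) := seg n (2 * i) (2 * i + 2) :|: seg n (a + i * j.+1) (a + i.+1 * j.+1).
have fG i : f i \in two_point_sets n b.
  have lt_is : i < s := ltn_ord i.
  have le_i : i.+1 * j.+1 <= s * j.+1 by rewrite leq_mul2r lt_is orbT.
  have sub1 : seg n (2 * i) (2 * i + 2) \subset seg n 0 a.
    by apply/subsetP => x; rewrite !inE; lia.
  have sub2 : seg n (a + i * j.+1) (a + i.+1 * j.+1) \subset seg n a (a + b).
    by apply/subsetP => x; rewrite !inE; lia.
  apply/imsetP; exists (seg n (2 * i) (2 * i + 2), seg n (a + i * j.+1) (a + i.+1 * j.+1)) => //.
  by rewrite !inE sub1 sub2 !card_seg ?mulSn /=; lia.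
rewrite -{1}[s]card_ord; apply: (@nu_ge_family _ _ _ f) => //.
  by move=> i; rewrite -card_gt0 (card_split_sets_mem (disjoint_head n b) (fG i)).
move=> i i' ne_ii'; rewrite -setI_eq0; apply/eqP/setP => x; rewrite !inE.
have := ltn_ord i; have := ltn_ord i'.
have [lt | gt | /val_inj eq_ii'] := ltngtP i i'; last by rewrite eq_ii' eqxx in ne_ii'.
  have : i.+1 * j.+1 <= i' * j.+1 by rewrite leq_mul2r lt orbT.
  lia.
have : i'.+1 * j.+1 <= i * j.+1 by rewrite leq_mul2r gt orbT.
lia.
Qed.

Definition two_point_family n := two_point_sets n (bn j s n).

Lemma two_point_family_extremal : eventually (fun n =>
  [/\ k_uniform j.+3 (two_point_family n), nu (two_point_family n) = s &
      #|shadow j.+3 (two_point_family n)| <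
        #|shadow j.+3 (colex_init #|two_point_family n| (EM1 n j.+3 s))|]).
Proof.
have ev := eventually_and (eventually_and (tn_small j s) (shadow_bound_lt_bin_tn j s))
  (eventually_and (eventually_and (tn_unbounded j s j.+3) (tn_unbounded j s s))
                  (eventually_and (bn_large j s) (eventually_ge a))).
apply: (eventually_impl ev) => n [[t_small shadow_lt] [[t_gt_j t_ge_s] [b_large an]]].
have hab : a + bn j s n <= n by have := bn_le j s n; lia.
split; [exact: two_point_sets_uniform | exact: nu_two_point_sets |].
apply: leq_ltn_trans (card_shadow_two_point_sets hab) _.
apply: leq_trans shadow_lt _; apply: shadow_colex_init_ge => //; first by lia.
rewrite card_two_point_sets // bin2_a; have := leq_mul (leqnn s) (bn_ge j s n); lia.
Qed.

End Construction.

Import Order.TTheory GRing.Theory Num.Theory.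
Local Open Scope ring_scope.

Lemma natr_rel_error (R : numDomainType) (x y K : nat) (eps : R) :
    0 < eps -> 1 <= eps * K%:R -> (x <= y)%N -> (K * (y - x) <= y)%N ->
  `|x%:R - y%:R| <= eps * y%:R.
Proof.
move=> eps_gt0 epsK le_xy le_Ky.
rewrite distrC ger0_norm ?subr_ge0 ?ler_nat // -natrB //.
apply: le_trans (_ : eps * (K * (y - x))%:R <= _).
  by rewrite natrM mulrA -{1}[(y - x)%:R]mul1r ler_wpM2r ?ler0n.
by apply: ler_wpM2l; [exact: ltW | rewrite ler_nat].
Qed.

Lemma two_point_family_card j s (eps : rat) : 0 < eps ->
  exists N : nat, forall n : nat, (N <= n)%N ->
    `| (#|two_point_family j s n|%:R : rat) - ('C(2 * s + 1, 2) * 'C(n, j.+1))%:R |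
      <= eps * ('C(2 * s + 1, 2) * 'C(n, j.+1))%:R.
Proof.
move=> eps_gt0; set K := Num.bound eps^-1.
have epsK : 1 <= eps * K%:R.
  have inv_ge0 : 0 <= eps^-1 by rewrite invr_ge0 ltW.
  have := archi_boundP inv_ge0; rewrite -(ltr_pM2l eps_gt0) mulfV ?gt_eqF //.
  exact: ltW.
have [N hN] := bn_asymptotic j s K; exists (N + 2 * s + 1)%N => n hn.
have Nn : (N <= n)%N by lia.
have bn_n : (bn j s n <= n)%N by have := bn_le j s n; lia.
have hab : (2 * s + 1 + bn j s n <= n)%N by have := bn_le j s n; lia.
apply: natr_rel_error epsK _ _ => //; rewrite card_two_point_sets //.
  by rewrite leq_mul2l leq_bin2l ?orbT.
have := leq_mul (leqnn 'C(2 * s + 1, 2)) (hN n Nn).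
rewrite -mulnBr; lia.
Qed.

Theorem fact1p11 (k s : nat) :
  (3 <= k)%N -> (1 <= s)%N ->
  exists (G : forall n : nat, {set {set 'I_n}}) (N0 : nat),
    (forall n : nat, (N0 <= n)%N ->
       [/\ k_uniform k (G n),
           nu (G n) = s &
           (#|shadow k (G n)| < #|shadow k (colex_init #|G n| (EM1 n k s))|)%N])
    /\
    (forall eps : rat, 0 < eps ->
       exists N : nat, forall n : nat, (N <= n)%N ->
         `| (#|G n|%:R : rat) - ('C(2 * s + 1, 2) * 'C(n, k - 2))%:R |
           <= eps * ('C(2 * s + 1, 2) * 'C(n, k - 2))%:R).
Proof.
move=> k_ge3 s_gt0; case: k k_ge3 => [|[|[|j]]] // _.
exists (two_point_family j s).
have [N0 extremal] := two_point_family_extremal j s_gt0.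
by exists N0; split; [exact: extremal | exact: two_point_family_card].
Qed.
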